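(* Let $\Omega$ be a program with weight constraints and let $\Pi_1$ be the program with nested expressions consisting of the rules $l\leftarrow\mathit{not}\,\mathit{not}\,l,[C_1],\dots,[C_n]$ for every rule $C_0\leftarrow C_1,\dots,C_n$ of $\Omega$ and every positive head element $l$ of that rule. For any consistent sets $Z,Z'$ of literals, $Z'$ satisfies $\Omega^Z$ iff $Z'\models\Pi_1^Z$.
   Context: A literal is an atom $a$ or $\neg a$; a set of literals is consistent if it contains no pair $a,\neg a$. Formulas are built from literals, $\bot$, $\top$ using $\mathit{not}$, '','' (conjunction), '';'' (disjunction). For consistent $Z$: $Z\models l$ iff $l\in Z$; $Z\models\top$; $Z\not\models\bot$; $Z\models(F,G)$ iff both; $Z\models(F;G)$ iff at least one; $Z\models\mathit{not}\,F$ iff $Z\not\models F$; $Z$ satisfies a set of rules $\mathit{Head}\leftarrow\mathit{Body}$ if $Z\models\mathit{Body}$ implies $Z\models\mathit{Head}$ for each. Reduct: $F^Z=F$ for $F$ a literal, $\bot$, $\top$; $(F,G)^Z=F^Z,G^Z$; $(F;G)^Z=F^Z;G^Z$; $(\mathit{not}\,F)^Z=\bot$ if $Z\models F$, else $\top$; $\Pi^Z$ applies this to heads and bodies. $\langle F_1,\dots,F_n\rangle:X$ is the disjunction over $I\in X$ of the conjunctions of $F_i$, $i\in I$ (empty conjunction $\top$, empty disjunction $\bot$). A rule element is a literal $l$ (positive) or $\mathit{not}\,l$ (negative). A weight constraint is $L\le\{c_1=w_1,\dots,c_m=w_m\}\le U$ ($L,U$ reals or $\pm\infty$, $w_i\ge0$);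 $Z$ satisfies it if $L\le\sum_{j:Z\models c_j}w_j\le U$. A program with weight constraints is a set of rules $C_0\leftarrow C_1,\dots,C_n$; the rule elements of $C_0$ are the head elements; $Z$ satisfies a set of such rules if for each rule, whenever $Z$ satisfies $C_1,\dots,C_n$ it satisfies $C_0$ (a literal $l$ in a head is identified with $1\le\{l=1\}$). $(L\le S)^Z=L^Z\le S'$, where $S'$ drops the pairs with negative elements and $L^Z$ is $L$ minus the sum of weights of pairs $c=w$ with $c$ negative and $Z\models c$. The reduct of $L_0\le S_0\le U_0\leftarrow L_1\le S_1\le U_1,\dots,L_n\le S_n\le U_n$ is, if $Z$ satisfies $S_i\le U_i$ for all $1\le i\le n$, the set of rules $l\leftarrow(L_1\le S_1)^Z,\dots,(L_n\le S_n)^Z$ for all positive head elements $l$ with $l\in Z$; otherwise empty. $\Omega^Z$ is the union of the reducts of its rules. Translation: $[w\le S]=\langle c_1,\dots,c_m\rangle:\{I: w\le\sum_{i\in I}w_i\}$, $[w<S]=\langle c_1,\dots,c_m\rangle:\{I: w<\sum_{i\in I}w_i\}$, $[S\le U]=\mathit{not}\,[U<S]$, $[L\le S\le U]=[L\le S],[S\le U]$. *)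

From Stdlib Require Import Reals List.
Import ListNotations.
Set Implicit Arguments.
Open Scope R_scope.

Inductive lit (A : Type) := Pos (a : A) | Neg (a : A).
Arguments Pos {A} a.
Arguments Neg {A} a.

Definition litset (A : Type) := lit A -> bool.

Definition consistent {A : Type} (Z : litset A) : Prop :=
  forall a, ~ (Z (Pos a) = true /\ Z (Neg a) = true).

Inductive form (A : Type) :=
| FLit (l : lit A) | FBot | FTop
| FNot (F : form A) | FAnd (F G : form A) | FOr (F G : form A).
Arguments FLit {A} l.  Arguments FBot {A}.  Arguments FTop {A}.
Arguments FNot {A} F.  Arguments FAnd {A} F G.  Arguments FOr {A} F G.

Fixpoint fsat {A : Type} (Z : litset A) (F : form A) : bool :=
  match F with
  | FLit l => Z l
  | FBot => false
  | FTop => true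
  | FNot G => negb (fsat Z G)
  | FAnd G H => fsat Z G && fsat Z H
  | FOr G H => fsat Z G || fsat Z H
  end.

Fixpoint freduct {A : Type} (Z : litset A) (F : form A) : form A :=
  match F with
  | FNot G => if fsat Z G then FBot else FTop
  | FAnd G H => FAnd (freduct Z G) (freduct Z H)
  | FOr G H => FOr (freduct Z G) (freduct Z H)
  | _ => F
  end.

Fixpoint bigAnd {A : Type} (l : list (form A)) : form A :=
  match l with
  | [] => FTop
  | [F] => F
  | F :: l' => FAnd F (bigAnd l')
  end.

Fixpoint bigOr {A : Type} (l : list (form A)) : form A :=
  match l with
  | [] => FBot
  | [F] => F
  | F :: l' => FOr F (bigOr l')
  end.

Record nrule (A : Type) := NRule { nhead : form A; nbody : form A }.
Definition nprogram (A : Type) := nrule A -> Prop.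

Definition nsat {A : Type} (Z : litset A) (Pi : nprogram A) : Prop :=
  forall r, Pi r -> fsat Z (nbody r) = true -> fsat Z (nhead r) = true.

Definition nreduct {A : Type} (Pi : nprogram A) (Z : litset A) : nprogram A :=
  fun r' => exists r, Pi r /\
    r' = NRule (freduct Z (nhead r)) (freduct Z (nbody r)).

(** Subsets of index sets {1..m}, represented as boolean masks of length m *)
Fixpoint masks (n : nat) : list (list bool) :=
  match n with
  | O => [[]]
  | S n' => map (cons true) (masks n') ++ map (cons false) (masks n')
  end.

Fixpoint select {T : Type} (m : list bool) (l : list T) : list T :=
  match m, l with
  | b :: m', x :: l' => if b then x :: select m' l' else select m' l'
  | _, _ => []
  end.

Definition choose {A : Type} (Fs : list (form A)) (X : list (list bool)) : form A :=
  bigOr (map (fun m => bigAnd (select m Fs)) X).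

Definition sumR (l : list R) : R := fold_right Rplus 0 l.

Inductive xR := XFin (r : R) | XPinf | XMinf.

Definition xle (w : xR) (s : R) : Prop :=
  match w with XFin r => r <= s | XMinf => True | XPinf => False end.
Definition xge (w : xR) (s : R) : Prop :=
  match w with XFin r => s <= r | XPinf => True | XMinf => False end.
Definition xle_b (w : xR) (s : R) : bool :=
  match w with
  | XFin r => if Rle_dec r s then true else false
  | XMinf => true | XPinf => false end.
Definition xlt_b (w : xR) (s : R) : bool :=
  match w with
  | XFin r => if Rlt_dec r s then true else false
  | XMinf => true | XPinf => false end.

Inductive relem (A : Type) := RPos (l : lit A) | RNeg (l : lit A).
Arguments RPos {A} l.  Arguments RNeg {A} l.

Definition relem_form {A : Type} (c : relem A) : form A :=
  match c with RPos l => FLit l | RNeg l => FNot (FLit l) end.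

Record wc (A : Type) := WC { lo : xR; elems : list (relem A * R); hi : xR }.

Definition wsum {A : Type} (Z : litset A) (S : list (relem A * R)) : R :=
  sumR (map snd (filter (fun p => fsat Z (relem_form (fst p))) S)).

Definition wc_sat {A : Type} (Z : litset A) (C : wc A) : Prop :=
  xle (lo C) (wsum Z (elems C)) /\ xge (hi C) (wsum Z (elems C)).

Record wrule (A : Type) := WRule { whead : wc A; wbody : list (wc A) }.
Definition wprogram (A : Type) := wrule A -> Prop.

Definition wsat {A : Type} (Z : litset A) (Om : wprogram A) : Prop :=
  forall r, Om r -> (forall C, In C (wbody r) -> wc_sat Z C) -> wc_sat Z (whead r).

Definition pos_head {A : Type} (r : wrule A) (l : lit A) : Prop :=
  exists w, In (RPos l, w) (elems (whead r)).

Record lwc (A : Type) := LWC { llo : xR; lelems : list (lit A * R) }.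

Definition lwc_sat {A : Type} (Z : litset A) (C : lwc A) : Prop :=
  xle (llo C) (sumR (map snd (filter (fun p => Z (fst p)) (lelems C)))).

Record rrule (A : Type) := RRule { rhead : lit A; rbody : list (lwc A) }.
Definition rprogram (A : Type) := rrule A -> Prop.

Definition rsat {A : Type} (Z : litset A) (P : rprogram A) : Prop :=
  forall r, P r -> (forall C, In C (rbody r) -> lwc_sat Z C) -> Z (rhead r) = true.

Definition xsub (w : xR) (d : R) : xR :=
  match w with XFin r => XFin (r - d) | _ => w end.

Fixpoint pos_part {A : Type} (S : list (relem A * R)) : list (lit A * R) :=
  match S with
  | [] => []
  | (RPos l, w) :: S' => (l, w) :: pos_part S'
  | (RNeg _, _) :: S' => pos_part S'
  end.

Fixpoint neg_sat_sum {A : Type} (Z : litset A) (S : list (relem A * R)) : R :=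
  match S with
  | [] => 0
  | (RPos _, _) :: S' => neg_sat_sum Z S'
  | (RNeg l, w) :: S' =>
      (if fsat Z (relem_form (RNeg l)) then w else 0) + neg_sat_sum Z S'
  end.

Definition lower_reduct {A : Type} (Z : litset A) (C : wc A) : lwc A :=
  LWC (xsub (lo C) (neg_sat_sum Z (elems C))) (pos_part (elems C)).

Definition wreduct {A : Type} (Om : wprogram A) (Z : litset A) : rprogram A :=
  fun r' => exists r, Om r /\
    (forall C, In C (wbody r) -> xge (hi C) (wsum Z (elems C))) /\
    exists l, pos_head r l /\ Z l = true /\
      r' = RRule l (map (lower_reduct Z) (wbody r)).

Definition tr_ge {A : Type} (w : xR) (S : list (relem A * R)) : form A :=
  choose (map (fun p => relem_form (fst p)) S)
    (filter (fun m => xle_b w (sumR (select m (map snd S)))) (masks (length S))).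

Definition tr_gt {A : Type} (w : xR) (S : list (relem A * R)) : form A :=
  choose (map (fun p => relem_form (fst p)) S)
    (filter (fun m => xlt_b w (sumR (select m (map snd S)))) (masks (length S))).

Definition tr_le {A : Type} (S : list (relem A * R)) (U : xR) : form A :=
  FNot (tr_gt U S).

Definition tr_wc {A : Type} (C : wc A) : form A :=
  FAnd (tr_ge (lo C) (elems C)) (tr_le (elems C) (hi C)).

Definition Pi1 {A : Type} (Om : wprogram A) : nprogram A :=
  fun r' => exists r l, Om r /\ pos_head r l /\
    r' = NRule (FLit l) (bigAnd (FNot (FNot (FLit l)) :: map tr_wc (wbody r))).

Definition nonneg_weights {A : Type} (Om : wprogram A) : Prop :=
  forall r, Om r -> forall C, (C = whead r \/ In C (wbody r)) ->
    forall p, In p (elems C) -> 0 <= snd p.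

(* Idea: with nonnegative weights, the disjunction over all index sets I with
   w <= sum_(i in I) w_i is satisfied by Z' exactly when the set of elements
   that Z' satisfies already reaches w; so [w <= S] and [w < S] just evaluate
   the weight sum.  In the reduct with respect to Z, a negative element
   [not l] becomes the constant true or false according to Z; the constant
   trues contribute the weights that define L^Z, so [L <= S]^Z holds in Z' iff
   (L <= S)^Z does.  The upper bound [not [U < S]] and [not not l] are reduced
   to constants decided by Z, namely Z |= S <= U and l in Z, which are exactly
   the side conditions under which Omega^Z contains the rule for l. *)

From Stdlib Require Import Reals List Lra Bool.
Open Scope R_scope.

Lemma select_map {T U : Type} (g : T -> U) m l :
  select m (map g l) = map g (select m l).
Proof.
  revert l; induction m as [|b m IH]; intros [|x l]; simpl; try reflexivity.
  destruct b; simpl; rewrite IH; reflexivity.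
Qed.

Lemma select_map_filter {T : Type} (h : T * R -> bool) (l : list (T * R)) :
  select (map h l) (map snd l) = map snd (filter h l).
Proof.
  induction l as [|x l IH]; simpl; [reflexivity|].
  destruct (h x); simpl; rewrite IH; reflexivity.
Qed.

Lemma in_masks (m : list bool) : In m (masks (length m)).
Proof.
  induction m as [|b m IH]; simpl; [auto|].
  apply in_or_app; destruct b; [left|right]; apply in_map; exact IH.
Qed.

Lemma sumR_select_ge0 m ws :
  Forall (fun w => 0 <= w) ws -> 0 <= sumR (select m ws).
Proof.
  revert m; induction ws as [|w ws IH]; intros [|b m] Hws; simpl; try lra.
  inversion Hws as [|? ? Hw Hws']; subst.
  specialize (IH m Hws').
  destruct b; simpl; fold (sumR (select m ws)); lra.
Qed.

(* [m] selects only positions where [bs] is [true]. *)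
Lemma sumR_select_le m bs ws :
  length bs = length ws -> Forall (fun w => 0 <= w) ws ->
  forallb (fun b : bool => b) (select m bs) = true ->
  sumR (select m ws) <= sumR (select bs ws).
Proof.
  revert m bs; induction ws as [|w ws IH]; intros m bs Hlen Hws Hsub.
  - destruct m, bs; simpl; lra.
  - destruct bs as [|b bs]; [discriminate|].
    injection Hlen as Hlen. inversion Hws as [|? ? Hw Hws']; subst.
    destruct m as [|c m].
    + apply (sumR_select_ge0 (b :: bs) (w :: ws)); auto.
    + simpl in Hsub |- *.
      destruct c, b; simpl in Hsub |- *; try discriminate;
        specialize (IH m bs Hlen Hws' Hsub);
        fold (sumR (select m ws)) (sumR (select bs ws)); lra.
Qed.

Lemma existsb_masks_monotone (P : R -> bool) bs ws :
  (forall s s', s <= s' -> P s = true -> P s' = true) ->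
  length bs = length ws -> Forall (fun w => 0 <= w) ws ->
  existsb (fun m => P (sumR (select m ws)) &&
                    forallb (fun b : bool => b) (select m bs))
          (masks (length ws))
  = P (sumR (select bs ws)).
Proof.
  intros Pmono Hlen Hws.
  destruct (P (sumR (select bs ws))) eqn:Pbs.
  - apply existsb_exists. exists bs; split.
    + rewrite <- Hlen; apply in_masks.
    + rewrite Pbs; simpl. clear; induction bs as [|[] bs IH]; simpl; auto.
  - apply not_true_iff_false; intro Hex.
    apply existsb_exists in Hex as [m [_ Hm]].
    apply andb_true_iff in Hm as [Pm Hsub].
    pose proof (Pmono _ _ (sumR_select_le m bs ws Hlen Hws Hsub) Pm).
    congruence.
Qed.

Lemma xle_b_monotone L s s' : s <= s' -> xle_b L s = true -> xle_b L s' = true.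
Proof.
  destruct L; simpl; auto.
  destruct (Rle_dec r s), (Rle_dec r s'); auto; lra.
Qed.

Lemma xlt_b_monotone U s s' : s <= s' -> xlt_b U s = true -> xlt_b U s' = true.
Proof.
  destruct U; simpl; auto.
  destruct (Rlt_dec r s), (Rlt_dec r s'); auto; lra.
Qed.

Lemma xle_b_true L s : xle_b L s = true <-> xle L s.
Proof.
  destruct L; simpl; [|split; [discriminate|tauto]|tauto].
  destruct (Rle_dec r s); split; intros; auto; discriminate.
Qed.

Lemma xlt_b_false U s : xlt_b U s = false <-> xge U s.
Proof.
  destruct U; simpl; [|tauto|split; [discriminate|tauto]].
  destruct (Rlt_dec r s); split; intros; auto; try discriminate; lra.
Qed.

Lemma xle_xsub L d s : xle (xsub L d) s <-> xle L (s + d).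
Proof. destruct L; simpl; [split; intro; lra|tauto|tauto]. Qed.

Section Translation.

Context {A : Type}.

Lemma fsat_bigAnd (Z : litset A) Fs : fsat Z (bigAnd Fs) = forallb (fsat Z) Fs.
Proof.
  induction Fs as [|F [|G Fs] IH]; simpl in *; auto using andb_true_r.
  rewrite IH; reflexivity.
Qed.

Lemma fsat_bigOr (Z : litset A) Fs : fsat Z (bigOr Fs) = existsb (fsat Z) Fs.
Proof.
  induction Fs as [|F [|G Fs] IH]; simpl in *; auto using orb_false_r.
  rewrite IH; reflexivity.
Qed.

Lemma freduct_bigAnd (Z : litset A) Fs :
  freduct Z (bigAnd Fs) = bigAnd (map (freduct Z) Fs).
Proof.
  induction Fs as [|F [|G Fs] IH]; simpl in *; auto.
  rewrite IH; reflexivity.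
Qed.

Lemma freduct_bigOr (Z : litset A) Fs :
  freduct Z (bigOr Fs) = bigOr (map (freduct Z) Fs).
Proof.
  induction Fs as [|F [|G Fs] IH]; simpl in *; auto.
  rewrite IH; reflexivity.
Qed.

Lemma freduct_choose (Z : litset A) Fs X :
  freduct Z (choose Fs X) = choose (map (freduct Z) Fs) X.
Proof.
  unfold choose; rewrite freduct_bigOr, map_map; f_equal.
  apply map_ext; intro m. rewrite freduct_bigAnd, select_map; reflexivity.
Qed.

Lemma forallb_map {T U : Type} (p : U -> bool) (g : T -> U) l :
  forallb p (map g l) = forallb (fun x => p (g x)) l.
Proof. induction l as [|x l IH]; simpl; congruence. Qed.

Lemma fsat_choose (Z : litset A) (f : relem A * R -> form A) S Q X :
  fsat Z (choose (map f S) (filter Q X)) =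
  existsb (fun m => Q m && forallb (fun b : bool => b)
                              (select m (map (fun p => fsat Z (f p)) S))) X.
Proof.
  unfold choose; rewrite fsat_bigOr.
  induction X as [|m X IH]; simpl; [reflexivity|].
  destruct (Q m); simpl; rewrite <- IH; [|reflexivity].
  rewrite fsat_bigAnd, !select_map, !forallb_map; reflexivity.
Qed.

Definition nonneg_elems (S : list (relem A * R)) : Prop :=
  forall p, In p S -> 0 <= snd p.

Lemma nonneg_elems_Forall S : nonneg_elems S -> Forall (fun w => 0 <= w) (map snd S).
Proof.
  intro HS; apply Forall_forall; intros w Hw.
  apply in_map_iff in Hw as [p [<- Hp]]; auto.
Qed.

Lemma fsat_tr_gt (Z : litset A) U S :
  nonneg_elems S -> fsat Z (tr_gt U S) = xlt_b U (wsum Z S).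
Proof.
  intro HS. unfold tr_gt; rewrite fsat_choose, <- (length_map snd S).
  rewrite existsb_masks_monotone by
    (apply xlt_b_monotone || (rewrite !length_map; reflexivity)
     || now apply nonneg_elems_Forall).
  unfold wsum; rewrite <- select_map_filter; reflexivity.
Qed.

Lemma sumR_select_freduct (Z Z' : litset A) S :
  sumR (select (map (fun p => fsat Z' (freduct Z (relem_form (fst p)))) S)
               (map snd S)) =
  sumR (map snd (filter (fun p => Z' (fst p)) (pos_part S))) + neg_sat_sum Z S.
Proof.
  unfold sumR; induction S as [|[[l|l] w] S IH]; simpl; [lra| |].
  - destruct (Z' l); simpl; lra.
  - destruct (Z l); simpl; lra.
Qed.

Lemma fsat_freduct_tr_ge (Z Z' : litset A) C :
  nonneg_elems (elems C) ->
  fsat Z' (freduct Z (tr_ge (lo C) (elems C))) = true <->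
  lwc_sat Z' (lower_reduct Z C).
Proof.
  intro HS. unfold tr_ge.
  rewrite freduct_choose, map_map, fsat_choose, <- (length_map snd (elems C)).
  rewrite existsb_masks_monotone by
    (apply xle_b_monotone || (rewrite !length_map; reflexivity)
     || now apply nonneg_elems_Forall).
  rewrite sumR_select_freduct, xle_b_true.
  unfold lwc_sat, lower_reduct; simpl. rewrite xle_xsub; tauto.
Qed.

Lemma fsat_freduct_tr_wc (Z Z' : litset A) C :
  nonneg_elems (elems C) ->
  fsat Z' (freduct Z (tr_wc C)) = true <->
  xge (hi C) (wsum Z (elems C)) /\ lwc_sat Z' (lower_reduct Z C).
Proof.
  intro HS. unfold tr_wc, tr_le; simpl.
  rewrite andb_true_iff, fsat_freduct_tr_ge, fsat_tr_gt, <- xlt_b_false by exact HS.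
  destruct (xlt_b (hi C) (wsum Z (elems C))); simpl; intuition discriminate.
Qed.

Lemma fsat_freduct_Pi1_body (Z Z' : litset A) (r : wrule A) l :
  (forall C, In C (wbody r) -> nonneg_elems (elems C)) ->
  fsat Z' (freduct Z (bigAnd (FNot (FNot (FLit l)) :: map tr_wc (wbody r)))) = true
  <-> Z l = true /\
      forall C, In C (wbody r) ->
        xge (hi C) (wsum Z (elems C)) /\ lwc_sat Z' (lower_reduct Z C).
Proof.
  intro Hr. rewrite freduct_bigAnd, fsat_bigAnd; simpl; rewrite map_map.
  rewrite andb_true_iff, forallb_forall.
  replace (fsat Z' (if negb (Z l) then FBot else FTop)) with (Z l)
    by (destruct (Z l); reflexivity).
  apply and_iff_compat_l; split.
  - intros Hbody C HC. apply fsat_freduct_tr_wc; auto.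
    apply Hbody, in_map_iff; eauto.
  - intros Hbody F HF. apply in_map_iff in HF as [C [<- HC]].
    apply fsat_freduct_tr_wc; auto.
Qed.

End Translation.

Lemma nonneg_weights_body {A : Type} {Omega : wprogram A} {r : wrule A} :
  nonneg_weights Omega -> Omega r ->
  forall C, In C (wbody r) -> nonneg_elems (elems C).
Proof. intros Hnn Hr C HC p Hp; eapply Hnn; eauto. Qed.

Theorem lemma6 (A : Type) (Omega : wprogram A) (Z Z' : litset A) :
  nonneg_weights Omega -> consistent Z -> consistent Z' ->
  (rsat Z' (wreduct Omega Z) <-> nsat Z' (nreduct (Pi1 Omega) Z)).
Proof.
  intros Hnn _ _. split.
  - intros Hred r' [r0 [[r [l [Hr [Hl ->]]]] ->]] Hbody; cbn [nhead nbody] in *.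
    apply fsat_freduct_Pi1_body in Hbody as [HZl Hbody];
      [|exact (nonneg_weights_body Hnn Hr)].
    apply (Hred (RRule l (map (lower_reduct Z) (wbody r)))).
    + exists r; repeat split; auto.
      * intros C HC; apply Hbody, HC.
      * exists l; auto.
    + intros C' HC'; apply in_map_iff in HC' as [C [<- HC]]; apply Hbody, HC.
  - intros Hred r' [r [Hr [Hhi [l [Hl [HZl ->]]]]]] Hbody; cbn [nhead nbody] in *.
    set (body := bigAnd (FNot (FNot (FLit l)) :: map tr_wc (wbody r))).
    apply (Hred (NRule (FLit l) (freduct Z body))).
    + exists (NRule (FLit l) body); split; [exists r, l; auto|reflexivity].
    + apply fsat_freduct_Pi1_body; [exact (nonneg_weights_body Hnn Hr)|].
      split; auto. intros C HC; split; auto.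
      apply Hbody, in_map_iff; eauto.
Qed.
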